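(* Let $\alpha_2,\alpha_3\le0$ and $\alpha_1\le\alpha_2^2/4$ be real. Let $\mathbf{x}=(x_s)\in(\mathbb{R}_{>0})^{\mathbb{Z}}$ satisfy, for all $v\in\mathbb{Z}$ (with $z_i=x_{v+i}$), $$z_0^2z_3^2+\alpha_1z_1^2z_2^2+\alpha_2z_0z_1z_2z_3+\alpha_3(z_0z_2^3+z_1^3z_3)=0,$$ and assume moreover that $z_3$ is the larger of the two real solutions of this equation, i.e. $z_3=\dfrac{-\alpha_3z_1^3-\alpha_2z_0z_1z_2+\sqrt D}{2z_0^2}$ with $D=\alpha_3^2z_1^6+2\alpha_2\alpha_3z_0z_1^4z_2+(\alpha_2^2-4\alpha_1)z_0^2z_1^2z_2^2-4\alpha_3z_0^3z_2^3$. Then for all $v\in\mathbb{Z}$, $$2z_0^2z_3+\alpha_2z_0z_1z_2+\alpha_3z_1^3=2z_{-1}z_2^2+\alpha_2z_0z_1z_2+\alpha_3z_1^3,$$ equivalently $z_0^2z_3=z_{-1}z_2^2$. *)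

From Stdlib Require Export Reals ZArith.
Open Scope R_scope.

Definition rel (a1 a2 a3 z0 z1 z2 z3 : R) : R :=
  z0^2 * z3^2 + a1 * z1^2 * z2^2 + a2 * z0 * z1 * z2 * z3
  + a3 * (z0 * z2^3 + z1^3 * z3).

Definition discr (a1 a2 a3 z0 z1 z2 : R) : R :=
  a3^2 * z1^6 + 2 * a2 * a3 * z0 * z1^4 * z2
  + (a2^2 - 4 * a1) * z0^2 * z1^2 * z2^2 - 4 * a3 * z0^3 * z2^3.

Definition big_root (a1 a2 a3 z0 z1 z2 : R) : R :=
  (- a3 * z1^3 - a2 * z0 * z1 * z2 + sqrt (discr a1 a2 a3 z0 z1 z2)) / (2 * z0^2).

(* Multiplying the relation at v by x_v^2 and the relation at v-1 by x_{v+2}^2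
   (the relation is invariant under reversing z0 z1 z2 z3) shows that
   P = x_v^2 x_{v+3} and Q = x_{v-1} x_{v+2}^2 are roots of one and the same
   quadratic T^2 + B T + C.  The root hypothesis says that P is its larger
   root, 2 P + B >= 0.  The sign conditions on the alpha_i propagate the
   "larger root" property of the relation at v-1 from its last variable to
   its first one, which is exactly 2 Q + B >= 0; hence P = Q. *)
From Stdlib Require Import Reals ZArith Lra Psatz.
Open Scope R_scope.

Lemma quadratic_larger_roots_eq (B C P Q : R) :
  P^2 + B * P + C = 0 -> Q^2 + B * Q + C = 0 ->
  0 <= 2 * P + B -> 0 <= 2 * Q + B -> P = Q.
Proof.
  intros hP hQ gP gQ.
  assert (hfac : (P - Q) * (P + Q + B) = 0) by nra.
  destruct (Rmult_integral _ _ hfac); lra.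
Qed.

Section Relation.

Variables a1 a2 a3 : R.

Lemma rel_rev (z0 z1 z2 z3 : R) :
  rel a1 a2 a3 z0 z1 z2 z3 = rel a1 a2 a3 z3 z2 z1 z0.
Proof. unfold rel; ring. Qed.

Lemma rel_quadratic_last (z0 z1 z2 z3 : R) :
  z0^2 * rel a1 a2 a3 z0 z1 z2 z3
  = (z0^2 * z3)^2 + (a2 * z0 * z1 * z2 + a3 * z1^3) * (z0^2 * z3)
    + z0^2 * (a1 * z1^2 * z2^2 + a3 * z0 * z2^3).
Proof. unfold rel; ring. Qed.

Lemma big_root_larger (z0 z1 z2 z3 : R) :
  0 < z0 -> z3 = big_root a1 a2 a3 z0 z1 z2 ->
  0 <= 2 * z0^2 * z3 + a2 * z0 * z1 * z2 + a3 * z1^3.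
Proof.
  intros hz0 ->; unfold big_root.
  replace (2 * z0^2 * _ + _ + _) with (sqrt (discr a1 a2 a3 z0 z1 z2))
    by (field; lra).
  apply sqrt_pos.
Qed.

Hypotheses (ha2 : a2 <= 0) (ha3 : a3 <= 0) (ha1 : a1 <= a2^2 / 4).

(* With q = 2 z0 z3 + a2 z1 z2, the hypothesis gives q >= 0, and the relation
   gives q^2 >= -4 a3 z0 z2^3; together with q <= 2 z0 z3 this yields
   q z3 >= -2 a3 z2^3, i.e. the claim. *)
Lemma larger_root_last_to_first (z0 z1 z2 z3 : R) :
  0 < z0 -> 0 < z1 -> 0 < z2 -> 0 < z3 ->
  rel a1 a2 a3 z0 z1 z2 z3 = 0 ->
  0 <= 2 * z0^2 * z3 + a2 * z0 * z1 * z2 + a3 * z1^3 ->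
  0 <= 2 * z0 * z3^2 + a2 * z1 * z2 * z3 + a3 * z2^3.
Proof.
  intros h0 h1 h2 h3 hrel hlast.
  set (q := 2 * z0 * z3 + a2 * z1 * z2).
  assert (hz1 : 0 <= - a3 * z1^3) by (apply Rmult_le_pos; [lra | apply pow_le; lra]).
  assert (hz2 : 0 <= - a3 * z2^3) by (apply Rmult_le_pos; [lra | apply pow_le; lra]).
  assert (hq : 0 <= q).
  { assert (z0 * q >= - a3 * z1^3) by (unfold q; nra). nra. }
  assert (hq2 : q^2 >= - 4 * a3 * z0 * z2^3).
  { assert (q^2 = (a2^2 - 4 * a1) * z1^2 * z2^2 - 4 * a3 * z0 * z2^3
                  - 4 * a3 * z1^3 * z3) by (unfold q, rel in *; nra).
    assert (0 <= (a2^2 - 4 * a1) * z1^2 * z2^2)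
      by (apply Rmult_le_pos; [apply Rmult_le_pos |]; nra).
    assert (0 <= - a3 * z1^3 * z3) by (apply Rmult_le_pos; lra).
    lra. }
  assert (hqle : q <= 2 * z0 * z3)
    by (unfold q; assert (0 < z1 * z2) by nra; nra).
  assert (hz03 : z0 * z3^2 >= - a3 * z2^3) by nra.
  assert (hqz3 : q * z3 >= - 2 * a3 * z2^3).
  { assert ((q * z3)^2 >= (- 2 * a3 * z2^3)^2) by nra. nra. }
  unfold q in hqz3; nra.
Qed.

End Relation.

Theorem theorem6p3 (a1 a2 a3 : R) (x : Z -> R)
  (ha2 : a2 <= 0) (ha3 : a3 <= 0) (ha1 : a1 <= a2^2 / 4)
  (hpos : forall s : Z, 0 < x s)
  (hrel : forall v : Z,
      rel a1 a2 a3 (x v) (x (v+1)%Z) (x (v+2)%Z) (x (v+3)%Z) = 0)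
  (hroot : forall v : Z,
      x (v+3)%Z = big_root a1 a2 a3 (x v) (x (v+1)%Z) (x (v+2)%Z)) :
  forall v : Z,
    2 * (x v)^2 * x (v+3)%Z + a2 * x v * x (v+1)%Z * x (v+2)%Z + a3 * (x (v+1)%Z)^3
    = 2 * x (v-1)%Z * (x (v+2)%Z)^2 + a2 * x v * x (v+1)%Z * x (v+2)%Z
      + a3 * (x (v+1)%Z)^3.
Proof.
  intro v.
  assert (hrel_v := hrel v); assert (hroot_v := hroot v).
  assert (hrel_prev := hrel (v-1)%Z); assert (hroot_prev := hroot (v-1)%Z).
  replace (v-1+1)%Z with v in hrel_prev, hroot_prev by lia.
  replace (v-1+2)%Z with (v+1)%Z in hrel_prev, hroot_prev by lia.
  replace (v-1+3)%Z with (v+2)%Z in hrel_prev, hroot_prev by lia.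
  assert (hw := hpos (v-1)%Z); assert (ha := hpos v).
  assert (hb := hpos (v+1)%Z); assert (hc := hpos (v+2)%Z).
  set (w := x (v-1)%Z) in *; set (a := x v) in *; set (b := x (v+1)%Z) in *.
  set (c := x (v+2)%Z) in *; set (d := x (v+3)%Z) in *.
  assert (hPQ : a^2 * d = w * c^2).
  { apply (quadratic_larger_roots_eq (a2 * a * b * c + a3 * b^3)
             (a^2 * (a1 * b^2 * c^2 + a3 * a * c^3))).
    - rewrite <- rel_quadratic_last, hrel_v. ring.
    - transitivity (c^2 * rel a1 a2 a3 w a b c).
      + rewrite rel_rev, rel_quadratic_last. ring.
      + rewrite hrel_prev. ring.
    - assert (H := big_root_larger a1 a2 a3 a b c d ha hroot_v). lra.
    - assert (H := larger_root_last_to_first a1 a2 a3 ha2 ha3 ha1 w a b c hw ha hb hc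
                     hrel_prev (big_root_larger a1 a2 a3 w a b c hw hroot_prev)).
      lra. }
  lra.
Qed.
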